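(* Let $f$, $\mathcal{I}$, and the notation for streams be as in the context, and let $0 < c \le 1$ and $\epsilon > 0$. Let $\mathcal{A}$ be an algorithm with the $c$-approximation property (not necessarily monotone). Let $S_1, S_2, S_3$ be finite streams and suppose $\mathcal{A}(S_1\circ S_2) \le (1+\epsilon)\,\mathcal{A}(S_2)$. Then $$\mathcal{A}(S_2\circ S_3) \ge \frac{c^2}{c+1+\epsilon}\, f(\mathtt{OPT}_{123}),$$ where $\mathtt{OPT}_{123}$ is an optimal solution for the stream $S_1\circ S_2\circ S_3$.
   Context: Let $U$ be a finite set of items and $f: 2^U \to \mathbb{R}_{\ge 0}$ a nonnegative submodular function, i.e. $f(A\cup\{v\}) - f(A) \ge f(B\cup\{v\}) - f(B)$ for all $A\subseteq B\subset U$ and $v\in U\setminus B$. Let $\mathcal{I}\subseteq 2^U$ be a hereditary constraint: $A\in\mathcal{I}$ and $A'\subseteq A$ imply $A'\in\mathcal{I}$ (with $\emptyset\in\mathcal{I}$). A stream is a finite sequence of items of $U$; $S_1\circ S_2$ denotes concatenation. For a stream $S$, an optimal solution $\mathtt{OPT}_S$ is a set maximizing $f$ over all sets in $\mathcal{I}$ consisting of items occurring in $S$. An algorithm $\mathcal{A}$ maps each stream $S$ to a set in $\mathcal{I}$ consisting of items occurring in $S$; $\mathcal{A}(S)$ denotes the $f$-value of that set. $\mathcal{A}$ has the $c$-approximation property if for every stream $S$, $\mathcal{A}(S)\ge c\cdot f(\mathtt{OPT}_S)$. *)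

From HB Require Import structures.
From mathcomp Require Import all_boot all_order all_algebra.
Set Implicit Arguments. Unset Strict Implicit. Unset Printing Implicit Defensive.
Import Order.TTheory GRing.Theory Num.Theory.
Local Open Scope ring_scope.

Definition stream (U : finType) := seq U.

Definition items (U : finType) (S : stream U) : {set U} := [set x | x \in S].

Definition nonneg_fun (R : realFieldType) (U : finType) (f : {set U} -> R) :=
  forall A, 0 <= f A.

Definition submodular (R : realFieldType) (U : finType) (f : {set U} -> R) :=
  forall (A B : {set U}) (v : U), A \subset B -> v \notin B ->
    f (v |: B) - f B <= f (v |: A) - f A.

Definition hereditary (U : finType) (I : pred {set U}) :=
  I set0 /\ forall A A' : {set U}, I A -> A' \subset A -> I A'.

Definition is_opt (R : realFieldType) (U : finType) (f : {set U} -> R)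
    (I : pred {set U}) (S : stream U) (O : {set U}) :=
  [/\ I O, O \subset items S &
      forall A : {set U}, I A -> A \subset items S -> f A <= f O].

Definition valid_alg (U : finType) (I : pred {set U}) (Alg : stream U -> {set U}) :=
  forall S, I (Alg S) /\ Alg S \subset items S.

Definition c_approx (R : realFieldType) (U : finType) (f : {set U} -> R)
    (I : pred {set U}) (Alg : stream U -> {set U}) (c : R) :=
  forall (S : stream U) (O : {set U}), is_opt f I S O -> c * f O <= f (Alg S).

From HB Require Import structures.
From mathcomp Require Import all_boot all_order all_algebra.
From mathcomp Require Import lra.
Set Implicit Arguments. Unset Strict Implicit. Unset Printing Implicit Defensive.
Import Order.TTheory GRing.Theory Num.Theory.
Local Open Scope ring_scope.

(* Split OPT_123 into its part X inside the items of S1 o S2 and the rest Y,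
   which lies in S3.  Submodularity gives f OPT_123 <= f X + f Y.  The part X is
   feasible for S1 o S2, so c f X <= A(S1 o S2) <= (1+eps) A(S2), and A(S2) is
   feasible for S2 o S3, so c A(S2) <= A(S2 o S3); Y is feasible for S2 o S3, so
   c f Y <= A(S2 o S3).  Combining, c^2 f OPT_123 <= (c + 1 + eps) A(S2 o S3). *)

Lemma is_opt_exists (R : realFieldType) (U : finType) (f : {set U} -> R)
    (I : pred {set U}) (S : stream U) :
  I set0 -> exists O, is_opt f I S O.
Proof.
move=> I0; have feas0 : I set0 && (set0 \subset items S) by rewrite I0 sub0set.
have [O /andP[IO sO] Omax] :=
  arg_maxP (P := fun A => I A && (A \subset items S)) f feas0.
by exists O; split=> // A IA sA; apply: Omax; rewrite IA sA.
Qed.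

Lemma submodular_disjointU (R : realFieldType) (U : finType) (f : {set U} -> R)
    (X Y : {set U}) :
  submodular f -> [disjoint X & Y] -> f (X :|: Y) + f set0 <= f X + f Y.
Proof.
move=> fsub; elim: {Y}#|Y| {-2}Y (erefl #|Y|) => [|n IHn] Y cardY dXY.
  by move/eqP: cardY; rewrite cards_eq0 => /eqP->; rewrite setU0 addrC.
have [v vY] : exists v, v \in Y by apply/set0Pn; rewrite -card_gt0 cardY.
have cardYv : #|Y :\ v| = n by move: (cardsD1 v Y); rewrite vY cardY add1n => -[].
have dXYv : [disjoint X & Y :\ v] by apply: disjointWr dXY; rewrite subsetDl.
have vXYv : v \notin X :|: Y :\ v.
  by rewrite in_setU setD11 orbF (disjointFl dXY vY).
have marg := fsub _ _ v (subsetUr X (Y :\ v)) vXYv.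
rewrite setUCA !setD1K // in marg.
have := IHn _ cardYv dXYv; lra.
Qed.

Lemma items_subset_catl (U : finType) (S S' : stream U) :
  items S \subset items (S ++ S').
Proof. by apply/subsetP => x; rewrite !inE mem_cat => ->. Qed.

Lemma setD_items_cat_subset (U : finType) (S1 S2 S3 : stream U) (A : {set U}) :
  A \subset items (S1 ++ S2 ++ S3) ->
  A :\: items (S1 ++ S2) \subset items (S2 ++ S3).
Proof.
move=> /subsetP sA; apply/subsetP => x /setDP[/sA]; rewrite !inE !mem_cat.
by case: (x \in S1); case: (x \in S2).
Qed.

Lemma approx_chain_bound (R : realFieldType) (c eps o b a : R) :
  0 < c -> 0 <= eps -> c * o <= (1 + eps) * b + a -> c * b <= a ->
  c ^+ 2 / (c + 1 + eps) * o <= a.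
Proof.
move=> c0 e0 ho hb; rewrite mulrAC ler_pdivrMr; last lra.
have : c * (c * o) <= c * ((1 + eps) * b + a) by rewrite ler_pM2l.
have : (1 + eps) * (c * b) <= (1 + eps) * a by rewrite ler_pM2l //; lra.
rewrite expr2; nra.
Qed.

Theorem lemma2 (R : realFieldType) (U : finType) (f : {set U} -> R)
  (I : pred {set U}) (Alg : stream U -> {set U}) (c eps : R)
  (S1 S2 S3 : stream U) (O123 : {set U}) :
  nonneg_fun f -> submodular f -> hereditary I ->
  0 < c -> c <= 1 -> 0 < eps ->
  valid_alg I Alg -> c_approx f I Alg c ->
  f (Alg (S1 ++ S2)) <= (1 + eps) * f (Alg S2) ->
  is_opt f I (S1 ++ S2 ++ S3) O123 ->
  c ^+ 2 / (c + 1 + eps) * f O123 <= f (Alg (S2 ++ S3)).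
Proof.
move=> fnn fsub [I0 Ihered] c0 _ e0 valid approx hA [IO sO _].
have [O12 opt12] := is_opt_exists f (S1 ++ S2) I0.
have [O23 opt23] := is_opt_exists f (S2 ++ S3) I0.
have [_ _ max12] := opt12; have [_ _ max23] := opt23.
set X := O123 :&: items (S1 ++ S2); set Y := O123 :\: items (S1 ++ S2).
have fO : f O123 <= f X + f Y.
  have dXY : [disjoint X & Y].
    by rewrite disjoints_subset; apply/subsetP => x; rewrite !inE => /andP[_ ->].
  have := submodular_disjointU fsub dXY; rewrite /X /Y setID.
  by apply: le_trans; rewrite lerDl fnn.
have fX : f X <= f O12.
  by apply: max12; [apply: Ihered IO (subsetIl _ _) | apply: subsetIr].
have fY : f Y <= f O23.
  by apply: max23; [apply: Ihered IO (subsetDl _ _) | apply: setD_items_cat_subset].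
have fA2 : f (Alg S2) <= f O23.
  have [IA sA] := valid S2; apply: max23 IA (subset_trans sA (items_subset_catl _ _)).
have a12 := approx _ _ opt12; have a23 := approx _ _ opt23.
apply: (approx_chain_bound (b := f (Alg S2))) => //; first exact: ltW; last by apply: le_trans a23; rewrite ler_pM2l.
rewrite (le_trans (_ : _ <= c * (f X + f Y))) ?ler_pM2l // mulrDr lerD //.
  by apply: le_trans hA; apply: le_trans a12; rewrite ler_pM2l.
by apply: le_trans a23; rewrite ler_pM2l.
Qed.
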